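(* Let $(G,E)$ be an undirected weighted graph with nodes $n_1,\dots,n_N$, symmetric nonnegative weights $w_{ij}$, strengths $k_i=\sum_sw_{is}$, $2m=\sum_ik_i>0$, $\gamma\in\mathbb R$, $\hat n\ge1$. For each $\epsilon>0$ let $f^\epsilon$ be a global minimizer over $X=\{f:G\to\mathbb R^{\hat n}\}$ of $$H_\epsilon(f)=\sum_{l=1}^{\hat n}\langle f^{(l)},\mathbf Lf^{(l)}\rangle+\frac{1}{\epsilon^2}\sum_{i=1}^N W_{\mathrm{multi}}(f(n_i))-\gamma\|f-\mathrm{mean}(f)\|_{\ell_2}^2.$$ Then for any sequence $\epsilon_n\to0^+$, any convergent subsequence of $(f^{\epsilon_n})$ converges (in $X\cong\mathbb R^{N\times\hat n}$) to the partition function of a partition that is a global maximizer of the modularity $Q$ among all partitions of $G$ into at most $\hat n$ communities.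
   Context: $\mathbf L=\mathbf D-\mathbf W$ is the graph Laplacian ($\mathbf W=[w_{ij}]$, $\mathbf D=\mathrm{diag}(k_i)$), with $\langle z,\mathbf Lz\rangle=\frac12\sum_{i,j}w_{ij}(z_i-z_j)^2$. $f=(f^{(1)},\dots,f^{(\hat n)})$. $V^{\hat n}=\{\vec e_1,\dots,\vec e_{\hat n}\}$ is the standard basis of $\mathbb R^{\hat n}$; $W_{\mathrm{multi}}(x)=\prod_{l=1}^{\hat n}\|x-\vec e_l\|_{\ell_1}^2$. For $h:G\to\mathbb R$: $\|h\|_{\ell_2}^2=\sum_ik_ih_i^2$, $\mathrm{mean}(h)=\frac1{2m}\sum_ik_ih_i$; for vector-valued $f$, $\|f\|_{\ell_2}^2=\sum_l\|f^{(l)}\|_{\ell_2}^2$ and $\mathrm{mean}$ is componentwise. A partition into at most $\hat n$ communities is an assignment $g_i\in\{1,\dots,\hat n\}$ (communities may be empty); its partition function is $f:G\to V^{\hat n}$, $f(n_i)=\vec e_{g_i}$. Its modularity is $Q(g)=\frac1{2m}\sum_{i,j}\big(w_{ij}-\gamma\frac{k_ik_j}{2m}\big)\delta(g_i,g_j)$, with $\delta(g_i,g_j)=1$ if $g_i=g_j$ and $0$ otherwise. *)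

From HB Require Import structures.
From mathcomp Require Import all_boot all_order all_algebra.
From mathcomp Require Import all_classical all_reals all_analysis.
Set Implicit Arguments. Unset Strict Implicit. Unset Printing Implicit Defensive.
Import Order.TTheory GRing.Theory Num.Theory.
Local Open Scope ring_scope.

Section Modularity.
Variables (R : realType) (N : nat).
Implicit Types (w : 'I_N -> 'I_N -> R).

Definition strength w (i : 'I_N) : R := \sum_(s < N) w i s.
Definition twom w : R := \sum_(i < N) strength w i.
(* <z, L z> with L = D - W *)
Definition laplace_form w (z : 'I_N -> R) : R :=
  \sum_(i < N) z i * (strength w i * z i - \sum_(j < N) w i j * z j).
Definition gmean w (h : 'I_N -> R) : R :=
  (twom w)^-1 * \sum_(i < N) strength w i * h i.
Definition l2sq w (h : 'I_N -> R) : R :=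
  \sum_(i < N) strength w i * h i ^+ 2.

Definition Wmulti (nh : nat) (x : 'I_nh -> R) : R :=
  \prod_(l < nh) (\sum_(c < nh) `|x c - (c == l)%:R|) ^+ 2.

(* f : G -> R^nh is represented by the N x nh matrix with f i l = f^(l)(n_i) *)
Definition Heps (nh : nat) w (gamma eps : R) (f : 'M[R]_(N, nh)) : R :=
  \sum_(l < nh) laplace_form w (fun i => f i l)
  + eps ^-2 * \sum_(i < N) Wmulti (fun l => f i l)
  - gamma * \sum_(l < nh) l2sq w (fun i => f i l - gmean w (fun j => f j l)).

Definition partition_fun (nh : nat) (g : 'I_N -> 'I_nh) : 'M[R]_(N, nh) :=
  \matrix_(i < N, l < nh) (g i == l)%:R.

Definition modularity (nh : nat) w (gamma : R) (g : 'I_N -> 'I_nh) : R :=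
  (twom w)^-1 * \sum_(i < N) \sum_(j < N)
     (w i j - gamma * (strength w i * strength w j / twom w)) * (g i == g j)%:R.
End Modularity.

Arguments strength {R N} w i.
Arguments twom {R N} w.
Arguments Heps {R N nh} w gamma eps f.
Arguments partition_fun {R N nh} g.
Arguments modularity {R N nh} w gamma g.

From HB Require Import structures.
From mathcomp Require Import all_boot all_order all_algebra.
From mathcomp Require Import all_classical all_reals all_analysis.
From mathcomp Require Import ring.
Set Implicit Arguments. Unset Strict Implicit. Unset Printing Implicit Defensive.
Import Order.TTheory GRing.Theory Num.Theory numFieldNormedType.Exports.
Local Open Scope classical_set_scope.
Local Open Scope ring_scope.

(** Write [H_eps = Hquad + eps^-2 Wtotal] with [Hquad] and [Wtotal] continuous,
    [Wtotal] nonnegative and vanishing exactly on partition functions.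
    Comparing the minimizer with a partition function [P] gives
    [Hquad (f^eps) + eps^-2 Wtotal (f^eps) <= Hquad P]; letting [eps -> 0]
    forces [Wtotal = 0] at the limit [F], so [F] is a partition function, and
    [Hquad F <= Hquad P] for every partition [P]. On partition functions
    [Hquad = 2m (1 - gamma) - 2m Q], so minimizing [Hquad] maximizes [Q]. *)

Lemma sum_delta_mul (R : pzSemiRingType) (I : finType) (a : I) (x : I -> R) :
  \sum_(l : I) (a == l)%:R * x l = x a.
Proof.
rewrite (bigD1 a) //= eqxx mul1r big1 ?addr0 // => l.
by rewrite eq_sym => /negbTE ->; rewrite mul0r.
Qed.

Section DoubleWell.
Variables (R : realType) (nh : nat).
Implicit Types x : 'I_nh -> R.

Lemma Wmulti_ge0 x : 0 <= Wmulti x.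
Proof. by apply: prodr_ge0 => l _; exact: sqr_ge0. Qed.

Lemma Wmulti_eq0 x : Wmulti x = 0 <-> exists l, forall c, x c = (c == l)%:R.
Proof.
split=> [/eqP/prodf_eq0[l _] | [l xE]].
  rewrite sqrf_eq0 => /eqP dist0; exists l => c.
  have /(_ c isT)/eqP := psumr_eq0P (fun c _ => normr_ge0 _) dist0.
  by rewrite normr_eq0 subr_eq0 => /eqP.
apply/eqP/prodf_eq0; exists l => //; rewrite sqrf_eq0 big1 // => c _.
by rewrite xE subrr normr0.
Qed.

End DoubleWell.

Section FiniteBigCvg.
Context {R : numFieldType} {T : Type} {F : set_system T} {FF : Filter F}.

Lemma cvg_sum_ord k (f : 'I_k -> T -> R) (a : 'I_k -> R) :
  (forall i, f i x @[x --> F] --> a i) ->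
  \sum_(i < k) f i x @[x --> F] --> \sum_(i < k) a i.
Proof. by move=> fa; apply: cvg_big => //; exact: add_continuous. Qed.

Lemma cvg_prod_ord k (f : 'I_k -> T -> R) (a : 'I_k -> R) :
  (forall i, f i x @[x --> F] --> a i) ->
  \prod_(i < k) f i x @[x --> F] --> \prod_(i < k) a i.
Proof. by move=> fa; apply: cvg_big => //; exact: mul_continuous. Qed.

Lemma cvg_mx_entry m n (u : T -> 'M[R]_(m, n)) (M : 'M[R]_(m, n)) i j :
  u x @[x --> F] --> M -> u x i j @[x --> F] --> M i j.
Proof. exact: (continuous_cvg _ (@coord_continuous R m n i j M)). Qed.

End FiniteBigCvg.

Section Energy.
Variables (R : realType) (N nh : nat) (w : 'I_N -> 'I_N -> R) (gamma : R).
Implicit Types (f : 'M[R]_(N, nh)) (g : 'I_N -> 'I_nh).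

Definition Hquad f : R :=
  \sum_(l < nh) laplace_form w (fun i => f i l)
  - gamma * \sum_(l < nh) l2sq w (fun i => f i l - gmean w (fun j => f j l)).

Definition Wtotal f : R := \sum_(i < N) Wmulti (fun l => f i l).

Lemma Heps_split eps f : Heps w gamma eps f = Hquad f + eps ^-2 * Wtotal f.
Proof. by rewrite /Heps /Hquad /Wtotal; ring. Qed.

Lemma Wtotal_ge0 f : 0 <= Wtotal f.
Proof. by apply: sumr_ge0 => i _; exact: Wmulti_ge0. Qed.

Lemma Wtotal_partition_fun g : Wtotal (partition_fun g) = 0.
Proof.
rewrite /Wtotal big1 // => i _; apply/Wmulti_eq0; exists (g i) => c.
by rewrite mxE eq_sym.
Qed.

Lemma Wtotal_eq0 f : Wtotal f = 0 -> exists g, f = partition_fun g.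
Proof.
move=> W0; have rows i : exists l, forall c, f i c = (c == l)%:R.
  apply/Wmulti_eq0; apply: (psumr_eq0P _ W0) => // j _; exact: Wmulti_ge0.
have [g fE] := boolp.choice rows.
by exists g; apply/matrixP => i l; rewrite mxE fE eq_sym.
Qed.

Lemma l2sq_centered (h : 'I_N -> R) : twom w != 0 ->
  l2sq w (fun i => h i - gmean w h) =
  \sum_(i < N) strength w i * h i ^+ 2
   - (\sum_(i < N) strength w i * h i) ^+ 2 / twom w.
Proof.
move=> m_neq0; rewrite /l2sq /gmean.
set S := \sum_(i < N) _ * h i; set c := (twom w)^-1 * S.
transitivity (\sum_(i < N) (strength w i * h i ^+ 2
   - (2 * c) * (strength w i * h i) + c ^+ 2 * strength w i)).
  by apply: eq_bigr => i _; ring.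
rewrite big_split /= sumrB -!mulr_sumr -/S /c -/(twom w).
by field.
Qed.

Lemma laplace_form_partition_fun g :
  \sum_(l < nh) laplace_form w (fun i => partition_fun g i l)
  = twom w - \sum_(i < N) \sum_(j < N) w i j * (g i == g j)%:R.
Proof.
rewrite /laplace_form exchange_big /= /twom -sumrB; apply: eq_bigr => i _.
under eq_bigr do rewrite !mxE.
rewrite sum_delta_mul eqxx mulr1; congr (_ - _).
by apply: eq_bigr => j _; rewrite mxE eq_sym.
Qed.

Lemma l2sq_centered_partition_fun g : twom w != 0 ->
  \sum_(l < nh) l2sq w (fun i => partition_fun g i l
                                 - gmean w (fun j => partition_fun g j l))
  = twom w - (\sum_(i < N) \sum_(j < N)
                strength w i * strength w j * (g i == g j)%:R) / twom w.
Proof.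
move=> m_neq0; under eq_bigr do rewrite l2sq_centered //.
rewrite sumrB; congr (_ - _).
  rewrite exchange_big /=; apply: eq_bigr => i _.
  under eq_bigr do rewrite mxE mulrC -mulrA.
  by rewrite sum_delta_mul eqxx mul1r.
rewrite -mulr_suml; congr (_ * _).
under eq_bigr do rewrite expr2 mulr_suml.
rewrite exchange_big /=; apply: eq_bigr => i _.
under eq_bigr do rewrite mulr_sumr.
rewrite exchange_big /=; apply: eq_bigr => j _.
under eq_bigr do rewrite !mxE.
transitivity (\sum_(l < nh)
    (g i == l)%:R * (strength w i * strength w j * (g j == l)%:R)).
  by apply: eq_bigr => l _; ring.
by rewrite sum_delta_mul eq_sym.
Qed.

Lemma Hquad_partition_fun g : twom w != 0 ->
  Hquad (partition_fun g) = twom w * (1 - gamma) - twom w * modularity w gamma g.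
Proof.
move=> m_neq0.
rewrite /Hquad laplace_form_partition_fun l2sq_centered_partition_fun //.
under [X in _ = _ - _ * (_ * X)]eq_bigr do
  (under eq_bigr do rewrite mulrBl; rewrite sumrB).
rewrite sumrB.
set A := \sum_(i < N) _; set B := \sum_(i < N) _; set C := \sum_(i < N) _.
have -> : C = gamma / twom w * B.
  rewrite /B /C mulr_sumr; apply: eq_bigr => i _; rewrite mulr_sumr.
  by apply: eq_bigr => j _; field.
by field.
Qed.

Lemma modularity_le_of_Hquad_ge g g' : 0 < twom w ->
  Hquad (partition_fun g) <= Hquad (partition_fun g') ->
  modularity w gamma g' <= modularity w gamma g.
Proof.
move=> m_gt0; rewrite !Hquad_partition_fun ?gt_eqF //.
by rewrite lerD2l lerN2 ler_pM2l.
Qed.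

Section Limits.
Context {T : Type} {G : set_system T} {FG : Filter G}.
Variables (u : T -> 'M[R]_(N, nh)) (M : 'M[R]_(N, nh)).
Hypothesis uM : u x @[x --> G] --> M.

Let entry i l : u x i l @[x --> G] --> M i l := cvg_mx_entry uM.

Lemma cvg_Hquad : Hquad (u x) @[x --> G] --> Hquad M.
Proof.
have mean l : gmean w (fun j => u x j l) @[x --> G] --> gmean w (fun j => M j l).
  by apply: cvgMl_tmp; apply: cvg_sum_ord => j; apply: cvgMl_tmp.
apply: cvgB.
  apply: cvg_sum_ord => l; apply: cvg_sum_ord => i; apply: cvgM => //.
  apply: cvgB; first exact: cvgMl_tmp.
  by apply: cvg_sum_ord => j; apply: cvgMl_tmp.
apply: cvgMl_tmp; apply: cvg_sum_ord => l; apply: cvg_sum_ord => i.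
by apply: cvgMl_tmp; rewrite expr2; apply: cvgM; apply: cvgB.
Qed.

Lemma cvg_Wtotal : Wtotal (u x) @[x --> G] --> Wtotal M.
Proof.
apply: cvg_sum_ord => i; apply: cvg_prod_ord => l; rewrite expr2.
by apply: cvgM; apply: cvg_sum_ord => c; apply: cvg_norm; apply: cvgB => //;
  exact: cvg_cst.
Qed.

End Limits.

End Energy.

Lemma increasing_cvgny (phi : nat -> nat) :
  (forall n, (phi n < phi n.+1)%N) -> phi @ \oo --> \oo.
Proof.
move=> phiS; have phi_ge n : (n <= phi n)%N.
  by elim: n => [|n IHn] //; exact: leq_ltn_trans IHn (phiS n).
by apply/cvgnyPge => A; exists A => // n /= An; exact: leq_trans An (phi_ge n).
Qed.

Lemma penalty_limit (R : realFieldType) (q W e : nat -> R) (q0 W0 c : R) :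
  (forall n, 0 < e n) -> e @ \oo --> 0 ->
  q @ \oo --> q0 -> W @ \oo --> W0 -> (forall n, 0 <= W n) ->
  (forall n, q n + (e n) ^-2 * W n <= c) -> q0 <= c /\ W0 = 0.
Proof.
move=> e_gt0 e0 qq0 WW0 W_ge0 bound.
have q_le n : q n <= c.
  apply: le_trans (bound n); rewrite lerDl mulr_ge0 //.
  by rewrite invr_ge0 exprn_ge0 // ltW.
split; first by apply: (cvgr_to_le qq0); near=> n; exact: q_le.
have W_le n : W n <= e n ^+ 2 * (c - q n).
  have en : e n ^+ 2 != 0 by rewrite expf_neq0 // gt_eqF.
  rewrite -[W n](mulVKf en) ler_wpM2l ?sqr_ge0 // lerBrDl.
  exact: bound.
have dominant : e n ^+ 2 * (c - q n) @[n --> \oo] --> 0.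
  have -> : 0 = 0 ^+ 2 * (c - q0) :> R by rewrite expr0n mul0r.
  by apply: cvgM; [rewrite expr2; apply: cvgM | apply: cvgB => //; exact: cvg_cst].
apply/eqP; rewrite eq_le (ler_cvg_to WW0 dominant) /=; last by near=> n; exact: W_le.
by rewrite (cvgr_to_ge WW0) //; near=> n.
Unshelve. all: by end_near.
Qed.

Theorem mainTheorem3 (R : realType) (N nh : nat) (w : 'I_N -> 'I_N -> R)
  (gamma : R) (fe : R -> 'M[R]_(N, nh)) :
  (forall i j, w i j = w j i) ->
  (forall i j, 0 <= w i j) ->
  0 < twom w ->
  (0 < nh)%N ->
  (forall eps : R, 0 < eps ->
     forall f : 'M[R]_(N, nh), Heps w gamma eps (fe eps) <= Heps w gamma eps f) ->
  forall (epsn : nat -> R) (phi : nat -> nat) (F : 'M[R]_(N, nh)),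
    (forall n, 0 < epsn n) ->
    epsn @ \oo --> 0 ->
    (forall n, (phi n < phi n.+1)%N) ->
    (fun n => fe (epsn (phi n))) @ \oo --> F ->
    exists g : 'I_N -> 'I_nh,
      F = partition_fun g /\
      (forall g' : 'I_N -> 'I_nh, modularity w gamma g' <= modularity w gamma g).
Proof.
move=> _ _ m_gt0 nh_gt0 fe_min epsn phi F epsn_gt0 epsn0 phiS feF.
have e0 : (fun n => epsn (phi n)) @ \oo --> 0.
  exact: (cvg_comp _ _ (increasing_cvgny phiS) epsn0).
have bound (g : 'I_N -> 'I_nh) n : Hquad w gamma (fe (epsn (phi n)))
    + (epsn (phi n)) ^-2 * Wtotal (fe (epsn (phi n)))
    <= Hquad w gamma (partition_fun g).
  rewrite -Heps_split -[X in _ <= X]addr0 -(mulr0 (epsn (phi n) ^-2)).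
  by rewrite -(Wtotal_partition_fun R g) -Heps_split; exact: fe_min.
have limit (g : 'I_N -> 'I_nh) :
    Hquad w gamma F <= Hquad w gamma (partition_fun g) /\ Wtotal F = 0.
  exact: penalty_limit (fun n => epsn_gt0 (phi n)) e0 (cvg_Hquad feF)
    (cvg_Wtotal feF) (fun n => Wtotal_ge0 _) (bound g).
have [g FE] := Wtotal_eq0 (limit (fun=> Ordinal nh_gt0)).2.
exists g; split => // g'; apply: modularity_le_of_Hquad_ge m_gt0 _.
by rewrite -FE; exact: (limit g').1.
Qed.
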